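(* Let $(a_n)$ be a sequence of positive reals with $1/a_n=O(1)$ as $n\to\infty$, and suppose that for some $\varepsilon>0$, $$\sum_{i=1}^{n}a_i=O\!\left(n(\ln n)^{1-\varepsilon}\right).$$ Then, as $n\to\infty$, $$\sum_{i=3}^{n}\frac{\ln\ln i}{\ln^2 i}\, i a_i\sim\frac{\ln\ln n}{\ln^2 n}\sum_{i=3}^{n} i a_i.$$ *)

From Stdlib Require Import Reals.
From Coquelicot Require Import Coquelicot.
Open Scope R_scope.

Definition sumR (f : nat -> R) (m n : nat) : R :=
  sum_f_R0 (fun k => f (m + k)%nat) (n - m) * (if (m <=? n)%nat then 1 else 0).

Definition bigO_seq (u v : nat -> R) : Prop :=
  exists C : R, exists N : nat, forall n : nat, (N <= n)%nat ->
    Rabs (u n) <= C * Rabs (v n).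

Definition asym_equiv (u v : nat -> R) : Prop :=
  is_lim_seq (fun n => u n / v n) 1.

From Stdlib Require Import Reals Lra Lia ZArith.
From Coquelicot Require Import Coquelicot.
Open Scope R_scope.

(* Put b_i = i a_i, S_n = sum_{3 <= i <= n} b_i and w(x) = ln ln x / ln^2 x, which is
   decreasing for x >= 9.  The hypotheses give c n^2 <= S_n <= K n^2 ln n.  Since w is
   decreasing, sum w(i) b_i >= w(n) (S_n - S_8), and S_8 / S_n -> 0.  For the upper bound
   split the sum at m ~ n / ln^2 n: the head is at most S_m = O(n^2 / ln^3 n), negligible
   against w(n) S_n >= c n^2 ln ln n / ln^2 n, and on the tail w(i) <= w(m), where
   w(m) / w(n) <= (ln n / ln m)^2 -> 1 because ln m >= ln n - 2 ln ln n - ln 2. *)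

Lemma sumR_empty f m n : (n < m)%nat -> sumR f m n = 0.
Proof. intros H. unfold sumR. destruct (Nat.leb_spec m n); [lia | ring]. Qed.

Lemma sumR_single f m : sumR f m m = f m.
Proof.
  unfold sumR. rewrite Nat.sub_diag, Nat.leb_refl. simpl. rewrite Nat.add_0_r. ring.
Qed.

Lemma sumR_Sr f m n : (m <= S n)%nat -> sumR f m (S n) = sumR f m n + f (S n).
Proof.
  intros H. destruct (Nat.eq_dec m (S n)) as [-> | Hne].
  - rewrite sumR_single, sumR_empty by lia. ring.
  - unfold sumR. replace (S n - m)%nat with (S (n - m)) by lia.
    rewrite tech5. destruct (Nat.leb_spec m (S n)), (Nat.leb_spec m n); try lia.
    replace (m + S (n - m))%nat with (S n) by lia. ring.
Qed.

Lemma sumR_ext f g m n :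
  (forall i, (m <= i <= n)%nat -> f i = g i) -> sumR f m n = sumR g m n.
Proof.
  intros Hfg. destruct (Nat.lt_ge_cases n m) as [Hnm | Hmn].
  { now rewrite !sumR_empty. }
  induction Hmn as [| n Hmn IH].
  - rewrite !sumR_single. apply Hfg; lia.
  - rewrite !sumR_Sr, IH, Hfg by (intros; try apply Hfg; lia). reflexivity.
Qed.

Lemma sumR_le f g m n :
  (forall i, (m <= i <= n)%nat -> f i <= g i) -> sumR f m n <= sumR g m n.
Proof.
  intros Hfg. destruct (Nat.lt_ge_cases n m) as [Hnm | Hmn].
  { rewrite !sumR_empty by lia. lra. }
  induction Hmn as [| n Hmn IH].
  - rewrite !sumR_single. apply Hfg; lia.
  - rewrite !sumR_Sr by lia. apply Rplus_le_compat.
    + apply IH. intros; apply Hfg; lia.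
    + apply Hfg; lia.
Qed.

Lemma sumR_scal c f m n : sumR (fun i => c * f i) m n = c * sumR f m n.
Proof.
  unfold sumR. rewrite <- Rmult_assoc, scal_sum. f_equal.
  apply sum_eq. intros; ring.
Qed.

Lemma sumR_nonneg f m n :
  (forall i, (m <= i <= n)%nat -> 0 <= f i) -> 0 <= sumR f m n.
Proof.
  intros Hf. rewrite <- (Rmult_0_l (sumR f m n)), <- sumR_scal.
  apply sumR_le. intros i Hi. rewrite Rmult_0_l. now apply Hf.
Qed.

Lemma sumR_split f m k n :
  (m <= S k)%nat -> (k <= n)%nat -> sumR f m n = sumR f m k + sumR f (S k) n.
Proof.
  intros Hmk Hkn. induction Hkn as [| n Hkn IH].
  - rewrite (sumR_empty f (S k) k) by lia. ring.
  - rewrite !sumR_Sr, IH by lia. ring.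
Qed.

Lemma sumR_INR_lower M n : (M <= n)%nat -> INR n ^ 2 - INR M ^ 2 <= 2 * sumR INR M n.
Proof.
  intros HMn. induction HMn as [| n HMn IH].
  - rewrite sumR_single. pose proof (pos_INR M). nra.
  - rewrite sumR_Sr, S_INR by lia. pose proof (le_INR _ _ HMn). nra.
Qed.

Lemma IZR_le_INR k n : (k <= n)%nat -> IZR (Z.of_nat k) <= INR n.
Proof. intros H. rewrite <- INR_IZR_INZ. now apply le_INR. Qed.

Lemma ln_le_sub1 x : 0 < x -> ln x <= x - 1.
Proof.
  intros Hx. destruct (Req_dec (ln x) 0) as [E | E].
  - assert (x = 1) by (rewrite <- (exp_ln x), E, exp_0 by lra; reflexivity). lra.
  - pose proof (exp_ineq1 _ E). rewrite exp_ln in H by lra. lra.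
Qed.

Lemma ln_lt_id x : 0 < x -> ln x < x.
Proof. intros Hx. pose proof (ln_le_sub1 x Hx). lra. Qed.

Lemma ln_ge_1 x : 3 <= x -> 1 <= ln x.
Proof.
  intros Hx. rewrite <- (ln_exp 1). apply ln_le; [apply exp_pos |].
  pose proof exp_le_3. lra.
Qed.

Lemma ln_ge_2 x : 9 <= x -> 2 <= ln x.
Proof.
  intros Hx. rewrite <- (ln_exp 2). apply ln_le; [apply exp_pos |].
  replace 2 with (1 + 1) by ring. rewrite exp_plus.
  pose proof exp_le_3. pose proof (exp_pos 1). nra.
Qed.

Lemma ln_sq_lt_sqrt x : 1 <= x -> ln x ^ 2 < 16 * sqrt x.
Proof.
  intros Hx. set (y := sqrt (sqrt x)).
  assert (Hy : 0 < y) by (apply sqrt_lt_R0, sqrt_lt_R0; lra).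
  assert (Hy2 : y * y = sqrt x) by (apply sqrt_sqrt, sqrt_pos).
  assert (Hx4 : x = y ^ 4).
  { replace (y ^ 4) with ((y * y) * (y * y)) by ring. rewrite Hy2, sqrt_sqrt; lra. }
  assert (Hln : ln x = 4 * ln y) by (rewrite Hx4, ln_pow by lra; simpl; ring).
  assert (0 <= ln x) by (rewrite <- ln_1; apply ln_le; lra).
  pose proof (ln_lt_id y Hy). nra.
Qed.

Lemma ln_div_sq_antitone s t : 2 <= s -> s <= t -> ln t / t ^ 2 <= ln s / s ^ 2.
Proof.
  intros Hs Hst.
  assert (Hts : ln t <= ln s + (t / s - 1)).
  { replace t with (s * (t / s)) at 1 by (field; lra).
    assert (0 < t / s) by (apply Rdiv_lt_0_compat; lra).
    rewrite ln_mult by lra. pose proof (ln_le_sub1 (t / s)). lra. }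
  assert (Hls : / 2 < ln s) by (pose proof ln_lt_2; pose proof (ln_le 2 s ltac:(lra) Hs); lra).
  (* t^2 ln s - s^2 ln t >= (t - s) ((t + s) ln s - s) >= 0 *)
  apply Rmult_le_reg_r with (t ^ 2 * s ^ 2); [apply Rmult_lt_0_compat; apply pow_lt; lra |].
  replace (ln t / t ^ 2 * (t ^ 2 * s ^ 2)) with (ln t * s ^ 2) by (field; lra).
  replace (ln s / s ^ 2 * (t ^ 2 * s ^ 2)) with (ln s * t ^ 2) by (field; lra).
  assert (ln t * s ^ 2 <= ln s * s ^ 2 + (t - s) * s).
  { replace ((t - s) * s) with ((t / s - 1) * s ^ 2) by (field; lra). nra. }
  assert (s <= ln s * (t + s)) by nra.
  assert ((t - s) * s <= (t - s) * (ln s * (t + s))) by (apply Rmult_le_compat_l; lra).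
  nra.
Qed.

Lemma ln_le_of_le_mul_ln_sq x m :
  1 < x -> 0 < m -> x <= 2 * m * ln x ^ 2 -> ln x <= ln 2 + ln m + 2 * ln (ln x).
Proof.
  intros Hx Hm Hxm.
  assert (Hl : 0 < ln x) by (rewrite <- ln_1; apply ln_increasing; lra).
  assert (Hsq : ln (ln x ^ 2) = 2 * ln (ln x)) by (rewrite ln_pow by lra; simpl; ring).
  rewrite <- Hsq, <- !ln_mult by (try apply pow_lt; lra).
  apply ln_le; lra.
Qed.

Lemma div_le_of_split t sm sn wm wn A B :
  0 < wn -> 0 < sn -> t <= sm + wm * sn -> sm <= A * (wn * sn) -> wm <= wn * B ->
  t / (wn * sn) <= A + B.
Proof.
  intros Hwn Hsn Ht Hsm Hwm.
  assert (wm * sn <= wn * B * sn) by (apply Rmult_le_compat_r; lra).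
  rewrite Rle_div_l by nra. nra.
Qed.

Lemma exists_nat_between_half x : 2 <= x -> exists m : nat, x / 2 <= INR m <= x.
Proof.
  intros Hx. destruct (archimed x) as [Hup1 Hup2].
  assert (Hz : (0 <= up x - 1)%Z) by (apply le_IZR; rewrite minus_IZR; simpl; lra).
  exists (Z.to_nat (up x - 1)).
  rewrite INR_IZR_INZ, Z2Nat.id, minus_IZR by exact Hz. simpl. lra.
Qed.

Definition loglog_weight (x : R) : R := ln (ln x) / ln x ^ 2.

Lemma loglog_weight_antitone x y : 9 <= x -> x <= y -> loglog_weight y <= loglog_weight x.
Proof.
  intros Hx Hxy. apply ln_div_sq_antitone; [now apply ln_ge_2 | apply ln_le; lra].
Qed.

Lemma loglog_weight_bounds x : 3 <= x -> 0 <= loglog_weight x <= 1.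
Proof.
  intros Hx. pose proof (ln_ge_1 x Hx). unfold loglog_weight. split.
  - apply Rdiv_le_0_compat; [rewrite <- ln_1; apply ln_le |]; nra.
  - apply Rmult_le_reg_r with (ln x ^ 2); [nra |].
    pose proof (ln_lt_id (ln x)). field_simplify; nra.
Qed.

Lemma loglog_weight_le_ratio m x :
  1 < m -> m <= x -> loglog_weight m <= loglog_weight x * (ln x / ln m) ^ 2.
Proof.
  intros Hm Hmx. unfold loglog_weight.
  assert (Hlm : 0 < ln m) by (rewrite <- ln_1; apply ln_increasing; lra).
  assert (Hlx : ln m <= ln x) by (apply ln_le; lra).
  replace (ln (ln x) / ln x ^ 2 * (ln x / ln m) ^ 2) with (ln (ln x) / ln m ^ 2)
    by (field; lra).
  apply Rmult_le_compat_r; [apply Rlt_le, Rinv_0_lt_compat; nra |].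
  apply ln_le; lra.
Qed.

Lemma loglog_weight_pos x : 9 <= x -> 0 < loglog_weight x.
Proof.
  intros Hx. pose proof (ln_ge_2 x Hx). unfold loglog_weight.
  apply Rdiv_lt_0_compat; [rewrite <- ln_1; apply ln_increasing |]; nra.
Qed.

Lemma loglog_weight_le_of_le_mul_ln_sq x y :
  9 <= y -> y <= x -> x <= 2 * y * ln x ^ 2 -> ln 2 + 2 * ln (ln x) < ln x ->
  loglog_weight y <= loglog_weight x * / (1 - (ln 2 + 2 * ln (ln x)) / ln x) ^ 2.
Proof.
  intros Hy9 Hyx Hxy Hgap.
  assert (HL : 2 <= ln x) by (apply ln_ge_2; lra).
  pose proof (loglog_weight_le_ratio y x ltac:(lra) Hyx) as Hw.
  pose proof (ln_le_of_le_mul_ln_sq x y ltac:(lra) ltac:(lra) Hxy) as Hlny.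
  set (D := ln x - ln 2 - 2 * ln (ln x)).
  assert (HD : 0 < D) by (unfold D; lra).
  assert (Hinv : / (1 - (ln 2 + 2 * ln (ln x)) / ln x) ^ 2 = (ln x / D) ^ 2)
    by (unfold D; field; lra).
  assert (Hratio : (ln x / ln y) ^ 2 <= (ln x / D) ^ 2).
  { apply pow_incr. split.
    - apply Rdiv_le_0_compat; unfold D in *; lra.
    - apply Rmult_le_compat_l; [lra |]. apply Rinv_le_contravar; unfold D in *; lra. }
  pose proof (loglog_weight_pos _ (Rle_trans _ _ _ Hy9 Hyx)).
  rewrite Hinv. eapply Rle_trans; [exact Hw |]. apply Rmult_le_compat_l; lra.
Qed.

Lemma is_lim_comp_seq_p_infty (f : R -> R) (u : nat -> R) (l : Rbar) :
  is_lim f p_infty l -> is_lim_seq u p_infty -> is_lim_seq (fun n => f (u n)) l.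
Proof.
  intros Hf Hu. apply (is_lim_comp_seq f u p_infty l Hf); [| exact Hu].
  exists 0%nat. intros n _. discriminate.
Qed.

Lemma is_lim_seq_ln_INR : is_lim_seq (fun n => ln (INR n)) p_infty.
Proof. exact (is_lim_comp_seq_p_infty ln INR _ is_lim_ln_p is_lim_seq_INR). Qed.

Lemma is_lim_seq_lnln_INR : is_lim_seq (fun n => ln (ln (INR n))) p_infty.
Proof. exact (is_lim_comp_seq_p_infty ln _ _ is_lim_ln_p is_lim_seq_ln_INR). Qed.

Lemma is_lim_seq_lnln_div_ln_INR :
  is_lim_seq (fun n => ln (ln (INR n)) / ln (INR n)) 0.
Proof.
  exact (is_lim_comp_seq_p_infty (fun y => ln y / y) _ _ is_lim_div_ln_p is_lim_seq_ln_INR).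
Qed.

Lemma is_lim_seq_INR_div_ln_sq : is_lim_seq (fun n => INR n / ln (INR n) ^ 2) p_infty.
Proof.
  apply is_lim_seq_le_p_loc with (fun n => sqrt (INR n) * / 16).
  - exists 2%nat. intros n Hn.
    assert (Hn1 : 1 < INR n) by (apply (lt_INR 1); lia).
    assert (Hl : 0 < ln (INR n)) by (rewrite <- ln_1; apply ln_increasing; lra).
    pose proof (ln_sq_lt_sqrt (INR n) ltac:(lra)).
    assert (Hs : sqrt (INR n) * sqrt (INR n) = INR n) by (apply sqrt_sqrt; lra).
    assert (1 <= sqrt (INR n)) by (rewrite <- sqrt_1; apply sqrt_le_1_alt; lra).
    rewrite <- Rle_div_r by (apply pow_lt; lra).
    assert (ln (INR n) ^ 2 * sqrt (INR n) <= 16 * sqrt (INR n) * sqrt (INR n)) by nra.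
    lra.
  - eapply is_lim_seq_mult; [| apply is_lim_seq_const |].
    + apply (is_lim_comp_seq_p_infty sqrt INR); [| exact is_lim_seq_INR].
      exact (is_lim_sqrt_p (fun x => x) p_infty (is_lim_id p_infty)).
    + apply is_Rbar_mult_p_infty_pos. simpl. lra.
Qed.

Lemma is_lim_seq_log_gap :
  is_lim_seq (fun n => (ln 2 + 2 * ln (ln (INR n))) / ln (INR n)) 0.
Proof.
  apply is_lim_seq_ext
    with (fun n => ln 2 * / ln (INR n) + 2 * (ln (ln (INR n)) / ln (INR n))).
  { intros n. unfold Rdiv. ring. }
  replace (Finite 0) with (Finite (ln 2 * 0 + 2 * 0)) by (f_equal; ring).
  apply is_lim_seq_plus'; apply is_lim_seq_mult'; try apply is_lim_seq_const.
  - apply (is_lim_seq_inv _ p_infty is_lim_seq_ln_INR). discriminate.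
  - exact is_lim_seq_lnln_div_ln_INR.
Qed.

(* For [A = K / c] the two terms bound the head and the tail of the weighted sum split
   at [m ~ n / ln^2 n]. *)
Definition ratio_bound (A : R) (n : nat) : R :=
  A * / (ln (INR n) * ln (ln (INR n)))
  + / (1 - (ln 2 + 2 * ln (ln (INR n))) / ln (INR n)) ^ 2.

Lemma is_lim_seq_ratio_bound A : is_lim_seq (ratio_bound A) 1.
Proof.
  replace (Finite 1) with (Finite (A * 0 + / ((1 - 0) * (1 - 0)))) by (f_equal; field).
  apply is_lim_seq_plus'.
  - apply is_lim_seq_mult'; [apply is_lim_seq_const |].
    apply (is_lim_seq_inv _ p_infty); [| discriminate].
    eapply is_lim_seq_mult; [exact is_lim_seq_ln_INR | exact is_lim_seq_lnln_INR |].
    apply is_Rbar_mult_p_infty_pos. exact I.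
  - apply is_lim_seq_ext
      with (fun n => / ((1 - (ln 2 + 2 * ln (ln (INR n))) / ln (INR n))
                       * (1 - (ln 2 + 2 * ln (ln (INR n))) / ln (INR n)))).
    { intros n. now rewrite <- Rsqr_pow2. }
    apply (is_lim_seq_inv _ (Finite ((1 - 0) * (1 - 0)))); [| simpl; injection; lra].
    apply is_lim_seq_mult'; apply is_lim_seq_minus';
      (apply is_lim_seq_const || apply is_lim_seq_log_gap).
Qed.

Section WeightedSums.

Variable b : nat -> R.
Hypothesis b_nonneg : forall i, (3 <= i)%nat -> 0 <= b i.

Let Sb n := sumR b 3 n.
Let Swb n := sumR (fun i => loglog_weight (INR i) * b i) 3 n.

Lemma partial_sum_nonneg n : 0 <= Sb n.
Proof. apply sumR_nonneg. intros i Hi. apply b_nonneg; lia. Qed.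

Lemma weighted_sum_ge n : (9 <= n)%nat -> loglog_weight (INR n) * (Sb n - Sb 8) <= Swb n.
Proof.
  intros Hn. unfold Swb, Sb. rewrite !(sumR_split _ 3 8 n) by lia.
  assert (0 <= sumR (fun i => loglog_weight (INR i) * b i) 3 8).
  { apply sumR_nonneg. intros i Hi. apply Rmult_le_pos.
    - apply loglog_weight_bounds, (IZR_le_INR 3); lia.
    - apply b_nonneg; lia. }
  assert (loglog_weight (INR n) * sumR b 9 n
          <= sumR (fun i => loglog_weight (INR i) * b i) 9 n).
  { rewrite <- sumR_scal. apply sumR_le. intros i Hi.
    apply Rmult_le_compat_r; [apply b_nonneg; lia |].
    apply loglog_weight_antitone; [apply (IZR_le_INR 9) | apply le_INR]; lia. }
  lra.
Qed.

Lemma weighted_sum_le_split m n :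
  (9 <= m <= n)%nat -> Swb n <= Sb m + loglog_weight (INR m) * Sb n.
Proof.
  intros Hmn. unfold Swb, Sb. rewrite !(sumR_split _ 3 m n) by lia.
  assert (Hwm : 0 <= loglog_weight (INR m) <= 1)
    by (apply loglog_weight_bounds, (IZR_le_INR 3); lia).
  assert (sumR (fun i => loglog_weight (INR i) * b i) 3 m <= sumR b 3 m).
  { apply sumR_le. intros i Hi.
    assert (0 <= loglog_weight (INR i) <= 1)
      by (apply loglog_weight_bounds, (IZR_le_INR 3); lia).
    pose proof (b_nonneg i ltac:(lia)). nra. }
  assert (sumR (fun i => loglog_weight (INR i) * b i) (S m) n
          <= loglog_weight (INR m) * sumR b (S m) n).
  { rewrite <- sumR_scal. apply sumR_le. intros i Hi.
    apply Rmult_le_compat_r; [apply b_nonneg; lia |].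
    apply loglog_weight_antitone; [apply (IZR_le_INR 9) | apply le_INR]; lia. }
  assert (0 <= sumR b 3 m) by (apply (partial_sum_nonneg m)).
  nra.
Qed.

Variables (c K : R) (Nc NK : nat).
Hypothesis c_pos : 0 < c.
Hypothesis Sb_lower : forall n, (Nc <= n)%nat -> c * INR n ^ 2 <= Sb n.
Hypothesis Sb_upper : forall n, (NK <= n)%nat -> Sb n <= K * INR n ^ 2 * ln (INR n).

Lemma growth_constant_nonneg : 0 <= K.
Proof.
  set (n := max NK 3).
  assert (Hn : 3 <= INR n) by (apply (IZR_le_INR 3); lia).
  pose proof (ln_ge_1 _ Hn). pose proof (partial_sum_nonneg n).
  pose proof (Sb_upper n ltac:(lia)).
  assert (0 < INR n ^ 2 * ln (INR n)) by (apply Rmult_lt_0_compat; [apply pow_lt|]; lra).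
  nra.
Qed.

Lemma is_lim_seq_partial_sum : is_lim_seq Sb p_infty.
Proof.
  apply is_lim_seq_le_p_loc with (fun n => INR n * c).
  - exists (max Nc 1). intros n Hn.
    assert (1 <= INR n) by (apply (IZR_le_INR 1); lia).
    assert (0 <= c * (INR n * (INR n - 1))) by (apply Rmult_le_pos; nra).
    pose proof (Sb_lower n ltac:(lia)). nra.
  - eapply is_lim_seq_mult; [exact is_lim_seq_INR | apply is_lim_seq_const |].
    apply is_Rbar_mult_p_infty_pos. exact c_pos.
Qed.

Lemma ratio_lower_eventually :
  eventually (fun n => 1 - Sb 8 / Sb n <= Swb n / (loglog_weight (INR n) * Sb n)).
Proof.
  exists (max Nc 9). intros n Hn.
  assert (H9 : 9 <= INR n) by (apply (IZR_le_INR 9); lia).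
  pose proof (loglog_weight_pos _ H9).
  assert (0 < c * INR n ^ 2) by (apply Rmult_lt_0_compat; [| apply pow_lt]; lra).
  assert (0 < Sb n) by (pose proof (Sb_lower n ltac:(lia)); lra).
  pose proof (weighted_sum_ge n ltac:(lia)).
  apply Rle_div_r; [nra |].
  replace ((1 - Sb 8 / Sb n) * (loglog_weight (INR n) * Sb n))
    with (loglog_weight (INR n) * (Sb n - Sb 8)) by (field; lra).
  assumption.
Qed.

Lemma split_head_le n m :
  (NK <= m)%nat -> (3 <= m <= n)%nat -> (max Nc 9 <= n)%nat ->
  INR m <= INR n / ln (INR n) ^ 2 -> 0 < ln (ln (INR n)) ->
  Sb m <= K / c * / (ln (INR n) * ln (ln (INR n))) * (loglog_weight (INR n) * Sb n).
Proof.
  intros HmK Hmn Hn Hmx HLL.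
  assert (Hm3 : 3 <= INR m) by (apply (IZR_le_INR 3); lia).
  assert (Hn9 : 9 <= INR n) by (apply (IZR_le_INR 9); lia).
  set (L := ln (INR n)) in *. set (LL := ln L) in *.
  assert (HL : 2 <= L) by now apply ln_ge_2.
  pose proof growth_constant_nonneg as HK.
  assert (Hlm : ln (INR m) <= L) by (apply ln_le; [lra | apply le_INR; lia]).
  assert (0 <= ln (INR m)) by (pose proof (ln_ge_1 _ Hm3); lra).
  assert (Hmm : INR m ^ 2 <= (INR n / L ^ 2) ^ 2) by (apply pow_incr; lra).
  assert (HSm : Sb m <= K * (INR n / L ^ 2) ^ 2 * L).
  { eapply Rle_trans; [exact (Sb_upper m HmK) |].
    apply Rmult_le_compat; [apply Rmult_le_pos; [| apply pow_le] | | apply Rmult_le_compat_l |];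
      lra. }
  assert (Hcoef : 0 <= K / c * / (L * LL) * loglog_weight (INR n)).
  { pose proof (loglog_weight_pos _ Hn9).
    apply Rmult_le_pos; [apply Rmult_le_pos;
      [apply Rdiv_le_0_compat | apply Rlt_le, Rinv_0_lt_compat] |]; nra. }
  replace (K * (INR n / L ^ 2) ^ 2 * L)
    with (K / c * / (L * LL) * loglog_weight (INR n) * (c * INR n ^ 2)) in HSm
    by (unfold loglog_weight; fold L LL; field; lra).
  pose proof (Sb_lower n ltac:(lia)).
  assert (K / c * / (L * LL) * loglog_weight (INR n) * (c * INR n ^ 2)
          <= K / c * / (L * LL) * loglog_weight (INR n) * Sb n)
    by (apply Rmult_le_compat_l; assumption).
  lra.
Qed.

Lemma ratio_upper_at n :
  (max Nc 9 <= n)%nat ->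
  2 * INR (max 9 NK) <= INR n / ln (INR n) ^ 2 ->
  0 < ln (ln (INR n)) ->
  ln 2 + 2 * ln (ln (INR n)) < ln (INR n) ->
  Swb n / (loglog_weight (INR n) * Sb n) <= ratio_bound (K / c) n.
Proof.
  intros Hn Hx HLL Hgap.
  assert (Hn9 : 9 <= INR n) by (apply (IZR_le_INR 9); lia).
  assert (HL : 2 <= ln (INR n)) by now apply ln_ge_2.
  assert (H9K : 9 <= INR (max 9 NK)) by (apply (IZR_le_INR 9); lia).
  destruct (exists_nat_between_half (INR n / ln (INR n) ^ 2) ltac:(lra)) as [m [Hm1 Hm2]].
  assert (HmK : (max 9 NK <= m)%nat) by (apply INR_le; lra).
  assert (Hxn : INR n / ln (INR n) ^ 2 <= INR n).
  { rewrite Rle_div_l by (apply pow_lt; lra).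
    assert (4 <= ln (INR n) ^ 2) by (simpl; nra). nra. }
  assert (Hmn : (m <= n)%nat) by (apply INR_le; lra).
  assert (Hnm : INR n <= 2 * INR m * ln (INR n) ^ 2).
  { replace (INR n) with (INR n / ln (INR n) ^ 2 * ln (INR n) ^ 2) at 1 by (field; lra).
    apply Rmult_le_compat_r; [apply pow_le |]; lra. }
  assert (0 < loglog_weight (INR n)) by now apply loglog_weight_pos.
  assert (0 < Sb n).
  { assert (0 < c * INR n ^ 2) by (apply Rmult_lt_0_compat; [| apply pow_lt]; lra).
    pose proof (Sb_lower n ltac:(lia)). lra. }
  unfold ratio_bound.
  apply (div_le_of_split _ (Sb m) _ (loglog_weight (INR m))); try assumption.
  - apply weighted_sum_le_split. lia.
  - apply split_head_le; try lia; lra.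
  - apply loglog_weight_le_of_le_mul_ln_sq; try assumption.
    + apply (IZR_le_INR 9). lia.
    + apply le_INR. exact Hmn.
Qed.

Lemma ratio_upper_eventually :
  eventually (fun n => Swb n / (loglog_weight (INR n) * Sb n) <= ratio_bound (K / c) n).
Proof.
  pose proof (proj2 (is_lim_seq_spec _ _) is_lim_seq_INR_div_ln_sq (2 * INR (max 9 NK))) as Ex.
  pose proof (proj2 (is_lim_seq_spec _ _) is_lim_seq_lnln_INR 0) as ELL.
  pose proof (proj2 (is_lim_seq_spec _ _) is_lim_seq_log_gap (mkposreal 1 Rlt_0_1)) as Egap.
  destruct Ex as [N1 H1], ELL as [N2 H2], Egap as [N3 H3].
  exists (max (max Nc 9) (max N1 (max N2 N3))). intros n Hn.
  assert (HL : 2 <= ln (INR n)) by (apply ln_ge_2, (IZR_le_INR 9); lia).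
  apply ratio_upper_at; [lia | apply Rlt_le, H1; lia | apply H2; lia |].
  specialize (H3 n ltac:(lia)). simpl in H3. rewrite Rminus_0_r in H3.
  apply Rabs_def2 in H3. destruct H3 as [H3 _].
  apply (Rmult_lt_compat_r (ln (INR n))) in H3; [| lra].
  unfold Rdiv in H3. rewrite Rmult_assoc, Rinv_l, Rmult_1_r in H3 by lra. lra.
Qed.

Theorem is_lim_seq_loglog_weighted_ratio :
  is_lim_seq (fun n => Swb n / (loglog_weight (INR n) * Sb n)) 1.
Proof.
  apply is_lim_seq_le_le_loc with (fun n => 1 - Sb 8 / Sb n) (ratio_bound (K / c)).
  - exact (filter_and _ _ ratio_lower_eventually ratio_upper_eventually).
  - replace (Finite 1) with (Finite (1 - Sb 8 * 0)) by (f_equal; ring).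
    apply is_lim_seq_minus'; [apply is_lim_seq_const |].
    apply is_lim_seq_mult'; [apply is_lim_seq_const |].
    apply (is_lim_seq_inv _ p_infty is_lim_seq_partial_sum). discriminate.
  - apply is_lim_seq_ratio_bound.
Qed.

End WeightedSums.

Lemma inv_bigO_1_lower_bound (a : nat -> R) :
  (forall n, (1 <= n)%nat -> 0 < a n) -> bigO_seq (fun n => / a n) (fun _ => 1) ->
  exists c, 0 < c /\ exists M, forall n, (M <= n)%nat -> c <= a n.
Proof.
  intros Hpos [C [N HC]].
  assert (Hbound : forall n, (max N 1 <= n)%nat -> 0 < / a n <= C).
  { intros n Hn. pose proof (Hpos n ltac:(lia)). specialize (HC n ltac:(lia)).
    rewrite Rabs_R1, Rmult_1_r, Rabs_pos_eq in HC
      by (apply Rlt_le, Rinv_0_lt_compat; lra).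
    split; [apply Rinv_0_lt_compat |]; lra. }
  assert (HC0 : 0 < C) by (destruct (Hbound (max N 1) (le_n _)); lra).
  exists (/ C). split; [now apply Rinv_0_lt_compat |].
  exists (max N 1). intros n Hn. destruct (Hbound n Hn) as [Hinv HinvC].
  rewrite <- (Rinv_inv (a n)). now apply Rinv_le_contravar.
Qed.

Lemma sumR_id_mul_lower (a : nat -> R) c M :
  (forall n, (1 <= n)%nat -> 0 < a n) -> 0 < c -> (forall n, (M <= n)%nat -> c <= a n) ->
  forall n, (2 * max M 3 <= n)%nat -> c / 4 * INR n ^ 2 <= sumR (fun i => INR i * a i) 3 n.
Proof.
  intros Hpos Hc HM n Hn. set (M' := max M 3).
  rewrite (sumR_split _ 3 (M' - 1) n) by lia. replace (S (M' - 1)) with M' by lia.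
  assert (0 <= sumR (fun i => INR i * a i) 3 (M' - 1)).
  { apply sumR_nonneg. intros i Hi. apply Rmult_le_pos; [apply pos_INR |].
    apply Rlt_le, Hpos; lia. }
  assert (c * sumR INR M' n <= sumR (fun i => INR i * a i) M' n).
  { rewrite <- sumR_scal. apply sumR_le. intros i Hi. rewrite Rmult_comm.
    apply Rmult_le_compat_l; [apply pos_INR | apply HM; lia]. }
  pose proof (sumR_INR_lower M' n ltac:(lia)).
  assert (HM2 : 2 * INR M' <= INR n).
  { replace 2 with (INR 2) by reflexivity. rewrite <- mult_INR. now apply le_INR. }
  pose proof (pos_INR M').
  assert (c * (INR n ^ 2 / 2) <= c * (2 * sumR INR M' n))
    by (apply Rmult_le_compat_l; nra).
  nra.
Qed.

Lemma sumR_id_mul_upper (a : nat -> R) eps :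
  (forall n, (1 <= n)%nat -> 0 < a n) -> 0 <= eps ->
  bigO_seq (fun n => sumR a 1 n) (fun n => INR n * Rpower (ln (INR n)) (1 - eps)) ->
  exists K N, forall n, (N <= n)%nat ->
    sumR (fun i => INR i * a i) 3 n <= K * INR n ^ 2 * ln (INR n).
Proof.
  intros Hpos Heps [K [N HK]]. exists K, (max N 3). intros n Hn.
  assert (Hn3 : 3 <= INR n) by (apply (IZR_le_INR 3); lia).
  assert (HL : 1 <= ln (INR n)) by now apply ln_ge_1.
  assert (HRp : 0 < Rpower (ln (INR n)) (1 - eps) <= ln (INR n)).
  { split; [apply exp_pos |].
    rewrite <- (Rpower_1 (ln (INR n))) at 2 by lra. apply Rle_Rpower; lra. }
  assert (Ha13 : 0 <= sumR a 1 2 /\ 0 <= sumR a 3 n).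
  { split; apply sumR_nonneg; intros i Hi; apply Rlt_le, Hpos; lia. }
  specialize (HK n ltac:(lia)).
  rewrite (sumR_split a 1 2 n), !Rabs_pos_eq in HK by (try lia; nra).
  assert (0 < INR n * Rpower (ln (INR n)) (1 - eps)) by (apply Rmult_lt_0_compat; lra).
  assert (HK0 : 0 <= K) by nra.
  assert (sumR (fun i => INR i * a i) 3 n <= INR n * sumR a 3 n).
  { rewrite <- sumR_scal. apply sumR_le. intros i Hi.
    apply Rmult_le_compat_r; [apply Rlt_le, Hpos; lia | apply le_INR; lia]. }
  assert (INR n * sumR a 3 n <= INR n * (K * (INR n * ln (INR n)))).
  { apply Rmult_le_compat_l; [lra |].
    assert (K * (INR n * Rpower (ln (INR n)) (1 - eps)) <= K * (INR n * ln (INR n)))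
      by (apply Rmult_le_compat_l; [| apply Rmult_le_compat_l]; lra).
    lra. }
  nra.
Qed.

Theorem lemma2 (a : nat -> R) (eps : R) :
  (forall n : nat, (1 <= n)%nat -> 0 < a n) ->
  bigO_seq (fun n => / a n) (fun _ => 1) ->
  0 < eps ->
  bigO_seq (fun n => sumR a 1 n)
           (fun n => INR n * Rpower (ln (INR n)) (1 - eps)) ->
  asym_equiv
    (fun n => sumR (fun i => ln (ln (INR i)) / (ln (INR i))^2 * INR i * a i) 3 n)
    (fun n => ln (ln (INR n)) / (ln (INR n))^2 * sumR (fun i => INR i * a i) 3 n).
Proof.
  intros Hpos Hinv Heps Hsum.
  destruct (inv_bigO_1_lower_bound a Hpos Hinv) as [c [Hc [M HM]]].
  destruct (sumR_id_mul_upper a eps Hpos (Rlt_le _ _ Heps) Hsum) as [K [NK HK]].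
  set (b := fun i => INR i * a i).
  assert (Hb : forall i, (3 <= i)%nat -> 0 <= b i).
  { intros i Hi. apply Rmult_le_pos; [apply pos_INR | apply Rlt_le, Hpos; lia]. }
  assert (Hc4 : 0 < c / 4) by lra.
  pose proof (is_lim_seq_loglog_weighted_ratio b Hb (c / 4) K (2 * max M 3) NK Hc4
                (sumR_id_mul_lower a c M Hpos Hc HM) HK) as Hlim.
  unfold asym_equiv. eapply is_lim_seq_ext; [| exact Hlim].
  intros n. cbv beta. f_equal. apply sumR_ext. intros i _. unfold b, loglog_weight. ring.
Qed.
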